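(* Let $q$ be a power of an odd prime with $q\equiv1\pmod4$, let $k\ge3$ be a divisor of $q-1$ with $(q-1)/k$ even, and let $B$ be the subgroup of order $k$ of $\mathbb{F}_q^\times$. Then $(q,k)$ gives a $3$-design if and only if $$\sum_{\{x,y,z\}\in\binom{B}{3}}\chi\big((x-y)(y-z)(z-x)\big)=0,$$ where $\binom{B}{3}$ denotes the set of $3$-element subsets of $B$.
   Context: The group $\mathrm{PSL}(2,q)$ acts on $\mathrm{PG}(1,q)=\mathbb{F}_q\cup\{\infty\}$ by linear fractional transformations $z\mapsto (az+b)/(cz+d)$ with $ad-bc$ a nonzero square in $\mathbb{F}_q$. ''$(q,k)$ gives a $3$-design'' means that the $\mathrm{PSL}(2,q)$-orbit of $B$ is the block set of a $3$-$(q+1,k,\lambda)$ design for some positive integer $\lambda$. $\chi$ is the quadratic residue character: $\chi(a)=1$ if $a$ is a nonzero square in $\mathbb{F}_q$, $\chi(a)=-1$ otherwise (the summand is well defined since $\chi(-1)=1$). *)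

From HB Require Import structures.
From mathcomp Require Import all_boot all_order all_algebra all_field.
Set Implicit Arguments. Unset Strict Implicit. Unset Printing Implicit Defensive.
Import GRing.Theory.
Local Open Scope ring_scope.

Section Defs.
Variable F : finFieldType.

(* PG(1,q) = F ∪ {∞}, with None = ∞. *)
Definition point := option F.

Definition nzsq (a : F) : bool := (a != 0) && [exists x : F, x * x == a].

Definition chi (a : F) : int := if a == 0 then 0 else if nzsq a then 1 else -1.

Definition lft (m : F * F * F * F) (z : point) : point :=
  let: (a, b, c, d) := m in
  match z with
  | Some x => if c * x + d == 0 then None else Some ((a * x + b) / (c * x + d))
  | None => if c == 0 then None else Some (a / c)
  end.

(* matrices with determinant a nonzero square: they induce PSL(2,q) *)
Definition psl_mats : {set F * F * F * F} :=
  [set m | let: (a, b, c, d) := m in nzsq (a * d - b * c)].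

Definition embed (B : {set F}) : {set point} := [set Some x | x in B].

Definition orbit_blocks (B : {set F}) : {set {set point}} :=
  [set lft m @: embed B | m in psl_mats].

Definition gives_3design (B : {set F}) (k : nat) : Prop :=
  (forall Bl, Bl \in orbit_blocks B -> #|Bl| = k) /\
  exists lambda : nat, (0 < lambda)%N /\
    forall T : {set point}, #|T| = 3%N ->
      #|[set Bl in orbit_blocks B | T \subset Bl]| = lambda.

Definition triple_term (S : {set F}) : int :=
  let s := enum S in chi ((s`_0 - s`_1) * (s`_1 - s`_2) * (s`_2 - s`_0)).

Definition triple_sum (B : {set F}) : int :=
  \sum_(S in [set S : {set F} | (S \subset B) && (#|S| == 3%N)]) triple_term S.

End Defs.

From HB Require Import structures.
From mathcomp Require Import all_boot all_order all_algebra all_field all_fingroup.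
From mathcomp Require Import cyclic ring.
Set Implicit Arguments. Unset Strict Implicit. Unset Printing Implicit Defensive.
Import GRing.Theory Num.Theory.
Local Open Scope ring_scope.

(* Write tau(p1, p2, p3) for the product of the three 2x2 determinants of homogeneous
   coordinates; on finite points it is (x - y)(y - z)(z - x).  A matrix sending an
   ordered triple s of distinct points to another one t exists and is unique up to a
   scalar, and modulo squares its determinant is tau(s) tau(t).  So for a 3-set
   T = {t1, t2, t3}, counting the pairs (m, b) with m in PSL(2,q) and b an ordered triple
   of distinct points of B mapped onto (t1, t2, t3) in two ways gives
     |Stab(B)| lambda(T) = (q - 1) N(chi(tau(t))),
   where N(+1), N(-1) count the ordered triples of B with square, resp. non-square, tau.
   Both classes occur among the t (take tau(oo, 0, x) = x), so the orbit of B is a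
   3-design iff N(+1) = N(-1).  As -1 is a square, the six orderings of a 3-subset of B
   share the value chi(tau), whence N(+1) - N(-1) = 6 * triple_sum B. *)

Section QuadraticResidues.
Variable F : finFieldType.

Lemma nzsqP (a : F) : reflect (exists2 x, x != 0 & a = x * x) (nzsq a).
Proof.
apply: (iffP andP) => [[na /existsP [x /eqP xa]] | [x nx ->]].
  by exists x => //; apply: contraNneq na => x0; rewrite -xa x0 mul0r.
by split; [rewrite mulf_neq0 | apply/existsP; exists x].
Qed.

Lemma nzsq_square (y : F) : y != 0 -> nzsq (y * y).
Proof. by move=> ny; apply/nzsqP; exists y. Qed.

Lemma nzsq1 : nzsq (1 : F).
Proof. by rewrite -[1]mulr1 nzsq_square ?oner_eq0. Qed.

Lemma nzsq_neq0 (a : F) : nzsq a -> a != 0.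
Proof. by case/andP. Qed.

Lemma nzsq_mul (a b : F) : nzsq a -> nzsq b -> nzsq (a * b).
Proof. by move=> /nzsqP [x nx ->] /nzsqP [y ny ->]; rewrite mulrACA nzsq_square ?mulf_neq0. Qed.

Lemma nzsq_mul_sqr (a x : F) : a != 0 -> nzsq (a ^+ 2 * x) = nzsq x.
Proof.
move=> na; apply/idP/idP => [sx | ]; last by apply: nzsq_mul; rewrite expr2 nzsq_square.
by rewrite -(mulKf (expf_neq0 2 na) x) -exprVn nzsq_mul // expr2 nzsq_square ?invr_eq0.
Qed.

Lemma expf_card_pred (x : F) : x != 0 -> x ^+ #|F|.-1 = 1.
Proof.
move=> nx; apply: (mulIf nx); rewrite mul1r -exprSr prednK ?expf_card //.
exact: ltnW (finNzRing_gt1 F).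
Qed.

Lemma exists_unit_generator :
  exists2 z : F, (forall j, (z ^+ j == 1) = (#|F|.-1 %| j)%N)
               & forall x, x != 0 -> exists i, x = z ^+ i.
Proof.
have /cyclicP [u defU] := field_unit_group_cyclic [set: {unit F}]%G.
have ou : #[u]%g = #|F|.-1 by rewrite /order -defU card_finField_unit.
exists (val u) => [j | x nx].
  by rewrite -ou order_dvdn -FinRing.val_unitX -FinRing.val_unit1 (inj_eq val_inj).
have : finField_unit nx \in <[u]>%g by rewrite -defU inE.
by case/cycleP => i Hi; exists i; rewrite -FinRing.val_unitX -Hi.
Qed.

Hypothesis oddF : odd #|F|.
Let h := (#|F|.-1)./2.

Lemma double_half_card_pred : h.*2 = #|F|.-1.
Proof.
have gt0 : (0 < #|F|)%N by exact: ltnW (finNzRing_gt1 F).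
by rewrite even_halfK // -oddS prednK.
Qed.

Lemma half_card_pred_gt0 : (0 < h)%N.
Proof.
rewrite -double_gt0 double_half_card_pred.
by move: oddF (finNzRing_gt1 F); case: #|F| => [|[|[]]].
Qed.

Lemma expr_half_sign (x : F) : x != 0 -> (x ^+ h == 1) || (x ^+ h == -1).
Proof.
by move=> nx; rewrite -sqrf_eq1 -exprM muln2 double_half_card_pred expf_card_pred.
Qed.

Lemma exists_generator_half :
  exists z : F, [/\ z != 0, z ^+ h != 1 & forall x, x != 0 -> exists i, x = z ^+ i].
Proof.
have [z ordz genz] := exists_unit_generator; exists z; split=> //.
  have : z ^+ h.*2 == 1 by rewrite ordz double_half_card_pred.
  apply: contraTneq => ->.
  by rewrite expr0n double_eq0 eqn0Ngt half_card_pred_gt0 eq_sym oner_eq0.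
by rewrite ordz -double_half_card_pred -muln2 -{2}(muln1 h) dvdn_pmul2l ?half_card_pred_gt0.
Qed.

Lemma oppr1_neq1 : (-1 : F) != 1.
Proof.
have [z [nz zh _]] := exists_generator_half.
by case/orP: (expr_half_sign nz) => /eqP zh'; [rewrite zh' eqxx in zh | rewrite -zh'].
Qed.

Lemma nzsq_euler (x : F) : nzsq x = (x != 0) && (x ^+ h == 1).
Proof.
have [-> | nx] := eqVneq x 0; first by rewrite /nzsq eqxx.
apply/idP/idP => [/nzsqP [y ny ->] | /andP [_ xh]].
  by rewrite /= -expr2 -exprM mul2n double_half_card_pred expf_card_pred.
have [z [nz zh genz]] := exists_generator_half.
have zhN1 : z ^+ h = -1 by case/orP: (expr_half_sign nz) => /eqP // zh1; rewrite zh1 eqxx in zh.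
have [i xE] := genz x nx.
move: xh; rewrite xE -exprM mulnC exprM zhN1 -signr_odd.
have [oi | ei] := boolP (odd i); first by rewrite expr1 (negbTE oppr1_neq1).
by rewrite -(even_halfK ei) -muln2 exprM expr2 nzsq_square // expf_neq0.
Qed.

Lemma nzsqM (x y : F) : x != 0 -> y != 0 -> nzsq (x * y) = (nzsq x == nzsq y).
Proof.
move=> nx ny; rewrite !nzsq_euler mulf_neq0 // nx ny exprMn.
have N1 := negbTE oppr1_neq1; have N1' : (1 == -1 :> F) = false by rewrite eq_sym.
by case/orP: (expr_half_sign nx) => /eqP ->; case/orP: (expr_half_sign ny) => /eqP ->;
  rewrite ?mulrNN ?mul1r ?mulr1 ?eqxx ?N1 ?N1'.
Qed.

Lemma exists_nonsq : exists2 n : F, n != 0 & ~~ nzsq n.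
Proof.
by have [z [nz zh _]] := exists_generator_half; exists z; rewrite // nzsq_euler nz.
Qed.

End QuadraticResidues.

Lemma odd_modn4_1 (n : nat) : (n %% 4 = 1)%N -> odd n.
Proof. by move=> n4; have := modn_dvdm n (isT : (2 %| 4)%N); rewrite n4 !modn2; case: (odd n). Qed.

Lemma nzsqN1 (F : finFieldType) : (#|F| %% 4 = 1)%N -> nzsq (-1 : F).
Proof.
move=> q4; rewrite nzsq_euler ?odd_modn4_1 // oppr_eq0 oner_eq0 /= -signr_odd.
have -> : #|F|.-1 = (#|F| %/ 4 * 2).*2 by rewrite {1}(divn_eq #|F| 4) q4 addn1 -muln2 -mulnA.
by rewrite doubleK oddM andbF expr0.
Qed.

Section Matrices.
Variable F : finFieldType.
Local Notation mat := (F * F * F * F)%type.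
Local Notation vec := (F * F)%type.

Definition mdet (m : mat) : F := let: (a, b, c, d) := m in a * d - b * c.
Definition mmul (m n : mat) : mat :=
  let: (a, b, c, d) := m in let: (a', b', c', d') := n in
  (a * a' + b * c', a * b' + b * d', c * a' + d * c', c * b' + d * d').
Definition madj (m : mat) : mat := let: (a, b, c, d) := m in (d, - b, - c, a).
Definition mscale (x : F) (m : mat) : mat :=
  let: (a, b, c, d) := m in (x * a, x * b, x * c, x * d).
Definition mid : mat := (1, 0, 0, 1).

Lemma mmulA m n r : mmul m (mmul n r) = mmul (mmul m n) r.
Proof.
case: m n r => [[[a b] c] d] [[[a' b'] c'] d'] [[[a'' b''] c''] d''] /=.
by congr (_, _, _, _); ring.
Qed.

Lemma mul1m m : mmul mid m = m.
Proof. by case: m => [[[a b] c] d] /=; congr (_, _, _, _); ring. Qed.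

Lemma mulm1 m : mmul m mid = m.
Proof. by case: m => [[[a b] c] d] /=; congr (_, _, _, _); ring. Qed.

Lemma mul_madj m : mmul m (madj m) = mscale (mdet m) mid.
Proof. by case: m => [[[a b] c] d] /=; congr (_, _, _, _); ring. Qed.

Lemma madj_mul m : mmul (madj m) m = mscale (mdet m) mid.
Proof. by case: m => [[[a b] c] d] /=; congr (_, _, _, _); ring. Qed.

Lemma mscale_mull x m n : mmul (mscale x m) n = mscale x (mmul m n).
Proof. by case: m n => [[[a b] c] d] [[[a' b'] c'] d'] /=; congr (_, _, _, _); ring. Qed.

Lemma mscale_mulr x m n : mmul m (mscale x n) = mscale x (mmul m n).
Proof. by case: m n => [[[a b] c] d] [[[a' b'] c'] d'] /=; congr (_, _, _, _); ring. Qed.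

Lemma mscaleA x y m : mscale x (mscale y m) = mscale (x * y) m.
Proof. by case: m => [[[a b] c] d] /=; congr (_, _, _, _); ring. Qed.

Lemma mscale1 m : mscale 1 m = m.
Proof. by case: m => [[[a b] c] d] /=; congr (_, _, _, _); ring. Qed.

Lemma mdet_mul m n : mdet (mmul m n) = mdet m * mdet n.
Proof. by case: m n => [[[a b] c] d] [[[a' b'] c'] d'] /=; ring. Qed.

Lemma mdet_adj m : mdet (madj m) = mdet m.
Proof. by case: m => [[[a b] c] d] /=; ring. Qed.

Lemma mdet_scale x m : mdet (mscale x m) = x ^+ 2 * mdet m.
Proof. by case: m => [[[a b] c] d] /=; ring. Qed.

End Matrices.

Section ProjectiveLine.
Variable F : finFieldType.
Local Notation mat := (F * F * F * F)%type.
Local Notation vec := (F * F)%type.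

Definition mapv (m : mat) (v : vec) : vec :=
  let: (a, b, c, d) := m in (a * v.1 + b * v.2, c * v.1 + d * v.2).
Definition vscale (x : F) (v : vec) : vec := (x * v.1, x * v.2).
Definition hom (p : point F) : vec := if p is Some x then (x, 1) else (1, 0).
Definition proj (v : vec) : point F := if v.2 == 0 then None else Some (v.1 / v.2).

Lemma lftE m p : lft m p = proj (mapv m (hom p)).
Proof. by case: m => [[[a b] c] d]; case: p => [x|]; rewrite /proj /= ?mulr1 ?mulr0 ?addr0. Qed.

Lemma proj_hom p : proj (hom p) = p.
Proof. by case: p => [x|]; rewrite /proj /= ?oner_eq0 ?divr1 ?eqxx. Qed.

Lemma proj_scale x v : x != 0 -> proj (vscale x v) = proj v.
Proof.
move=> nx; rewrite /proj /= mulf_eq0 (negbTE nx) /=.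
by case: ifP => // _; rewrite invfM mulrACA divff // mul1r.
Qed.

Lemma hom_proj v : v != (0, 0) -> exists2 x, x != 0 & v = vscale x (hom (proj v)).
Proof.
case: v => u w; rewrite xpair_eqE /proj /=.
have [-> | nw] := eqVneq w 0; rewrite ?andbT => nu.
  by exists u => //; rewrite /vscale /= mulr1 mulr0.
by exists w => //; rewrite /vscale /= mulr1 mulrC divfK.
Qed.

Lemma hom_neq0 p : hom p != (0, 0).
Proof. by case: p => [x|]; rewrite /= xpair_eqE oner_eq0 ?andbF ?andFb. Qed.

Lemma mapv_neq0 m v : mdet m != 0 -> v != (0, 0) -> mapv m v != (0, 0).
Proof.
case: m v => [[[a b] c] d] [u w] /= nd; apply: contraNneq => -[h1 h2].
have e1 : (a * d - b * c) * u = d * (a * u + b * w) - b * (c * u + d * w) by ring.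
have e2 : (a * d - b * c) * w = a * (c * u + d * w) - c * (a * u + b * w) by ring.
move: e1 e2; rewrite h1 h2 !mulr0 subrr => /eqP + /eqP.
by rewrite !mulf_eq0 (negbTE nd) => /eqP -> /eqP ->.
Qed.

Lemma mapv_mul m n v : mapv (mmul m n) v = mapv m (mapv n v).
Proof. by case: m n v => [[[a b] c] d] [[[a' b'] c'] d'] [u w] /=; congr pair; ring. Qed.

Lemma mapv_vscale m x v : mapv m (vscale x v) = vscale x (mapv m v).
Proof. by case: m v => [[[a b] c] d] [u w]; rewrite /vscale /=; congr pair; ring. Qed.

Lemma mapv_mscale x m v : mapv (mscale x m) v = vscale x (mapv m v).
Proof. by case: m v => [[[a b] c] d] [u w]; rewrite /vscale /=; congr pair; ring. Qed.

Lemma lft_mul (m n : mat) (p : point F) : mdet n != 0 -> lft (mmul m n) p = lft m (lft n p).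
Proof.
move=> nd; rewrite !lftE mapv_mul.
have [x nx {1}->] := hom_proj (mapv_neq0 nd (hom_neq0 p)).
by rewrite mapv_vscale proj_scale.
Qed.

Lemma lft_scale x (m : mat) (p : point F) : x != 0 -> lft (mscale x m) p = lft m p.
Proof. by move=> nx; rewrite !lftE mapv_mscale proj_scale. Qed.

Lemma lft_id (p : point F) : lft (mid F) p = p.
Proof. by case: p => [x|] /=; rewrite ?eqxx // mul0r add0r oner_eq0 mul1r addr0 divr1. Qed.

Lemma lft_adjK (m : mat) (p : point F) : mdet m != 0 -> lft (madj m) (lft m p) = p.
Proof. by move=> nd; rewrite -lft_mul // madj_mul lft_scale // lft_id. Qed.

Lemma lft_inj (m : mat) : mdet m != 0 -> injective (lft m).
Proof. by move=> nd x y /(congr1 (lft (madj m))); rewrite !lft_adjK. Qed.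

Lemma lft_fix3_scalar (n : mat) : lft n None = None -> lft n (Some 0) = Some 0 ->
  lft n (Some 1) = Some 1 -> exists c, n = (c, 0, 0, c).
Proof.
case: n => [[[a b] c] d] /=; have [-> _ | //] := eqVneq c 0.
rewrite !mul0r !add0r mulr0 add0r; have [// | nd [] bd] := eqVneq d 0.
have b0 : b = 0 by move/eqP: bd; rewrite mulf_eq0 invr_eq0 (negbTE nd) orbF => /eqP.
rewrite b0 mulr1 addr0 => -[] /(congr1 ( *%R^~ d)); rewrite divfK // => ->.
by exists d; rewrite mul1r.
Qed.

End ProjectiveLine.

Section Frames.
Variable F : finFieldType.
Local Notation mat := (F * F * F * F)%type.
Local Notation vec := (F * F)%type.

Definition cross (u v : vec) : F := u.1 * v.2 - u.2 * v.1.

Definition tau (p1 p2 p3 : point F) : F :=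
  cross (hom p1) (hom p2) * cross (hom p2) (hom p3) * cross (hom p3) (hom p1).

Lemma cross_hom_eq0 (p r : point F) : (cross (hom p) (hom r) == 0) = (p == r).
Proof.
case: p r => [x|] [y|]; rewrite /cross /= ?mulr1 ?mul1r ?mulr0 ?mul0r ?subr0 ?sub0r
  ?oppr_eq0 ?oner_eq0 ?subr_eq0 ?eqxx //.
Qed.

Lemma tau_neq0 (p1 p2 p3 : point F) :
  p1 != p2 -> p2 != p3 -> p3 != p1 -> tau p1 p2 p3 != 0.
Proof. by move=> n12 n23 n31; rewrite !mulf_neq0 // cross_hom_eq0. Qed.

Lemma tau_Some (x y z : F) : tau (Some x) (Some y) (Some z) = (x - y) * (y - z) * (z - x).
Proof. by rewrite /tau /cross /= !mulr1 !mul1r. Qed.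

Lemma tau_inf0 (x : F) : tau None (Some 0) (Some x) = x.
Proof. by rewrite /tau /cross /=; ring. Qed.

(* By Cramer's rule v3 = al v1 + be v2; the columns of the frame are al v1 and be v2. *)
Definition frame (v1 v2 v3 : vec) : mat :=
  let al := cross v3 v2 / cross v1 v2 in let be := cross v1 v3 / cross v1 v2 in
  (al * v1.1, be * v2.1, al * v1.2, be * v2.2).

Lemma frame_spec (v1 v2 v3 : vec) : cross v1 v2 != 0 ->
  [/\ mapv (frame v1 v2 v3) (1, 0) = vscale (cross v3 v2 / cross v1 v2) v1,
      mapv (frame v1 v2 v3) (0, 1) = vscale (cross v1 v3 / cross v1 v2) v2,
      mapv (frame v1 v2 v3) (1, 1) = v3 &
      mdet (frame v1 v2 v3) = (cross v1 v2)^-1 ^+ 2 * (cross v1 v2 * cross v2 v3 * cross v3 v1)].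
Proof.
case: v1 v2 v3 => [u1 w1] [u2 w2] [u3 w3]; rewrite /cross /= => nd.
by split; rewrite /frame /vscale /cross /=; try congr pair; field.
Qed.

Definition pframe (p1 p2 p3 : point F) : mat := frame (hom p1) (hom p2) (hom p3).

Lemma pframe_spec (p1 p2 p3 : point F) : p1 != p2 -> p2 != p3 -> p3 != p1 ->
  [/\ lft (pframe p1 p2 p3) None = p1, lft (pframe p1 p2 p3) (Some 0) = p2,
      lft (pframe p1 p2 p3) (Some 1) = p3,
      mdet (pframe p1 p2 p3) = (cross (hom p1) (hom p2))^-1 ^+ 2 * tau p1 p2 p3 &
      mdet (pframe p1 p2 p3) != 0].
Proof.
move=> n12 n23 n31; have d12 : cross (hom p1) (hom p2) != 0 by rewrite cross_hom_eq0.
have [e1 e2 e3 e4] := frame_spec (hom p3) d12.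
rewrite /pframe !lftE e1 e2 e3 e4 !proj_scale ?proj_hom ?mulf_neq0 ?invr_eq0 ?expf_neq0 //.
all: by rewrite ?tau_neq0 // cross_hom_eq0 // eq_sym.
Qed.

End Frames.

Lemma psl_matsE (F : finFieldType) (m : F * F * F * F) : (m \in psl_mats F) = nzsq (mdet m).
Proof. by case: m => [[[a b] c] d]; rewrite inE. Qed.

Section SharpTransitivity.
Variable F : finFieldType.
Local Notation mat := (F * F * F * F)%type.

Definition maps3 (s1 s2 s3 t1 t2 t3 : point F) (m : mat) : bool :=
  [&& lft m s1 == t1, lft m s2 == t2 & lft m s3 == t3].

Variables (s1 s2 s3 t1 t2 t3 : point F) (gs gt : mat).
Hypotheses (dgs : mdet gs != 0) (dgt : mdet gt != 0).
Hypotheses (gs1 : lft gs None = s1) (gs2 : lft gs (Some 0) = s2) (gs3 : lft gs (Some 1) = s3).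
Hypotheses (gt1 : lft gt None = t1) (gt2 : lft gt (Some 0) = t2) (gt3 : lft gt (Some 1) = t3).

Local Notation K := (mmul gt (madj gs)).
Local Notation maps := (maps3 s1 s2 s3 t1 t2 t3).

Lemma mdet_K_neq0 : mdet K != 0.
Proof. by rewrite mdet_mul mdet_adj mulf_neq0. Qed.

Lemma maps3_scale_K a : a != 0 -> maps (mscale a K).
Proof.
move=> na; have gsV p r : lft gs p = r -> lft (madj gs) r = p by move=> <-; rewrite lft_adjK.
rewrite /maps3 !lft_scale // !lft_mul ?mdet_adj //.
by rewrite (gsV _ _ gs1) (gsV _ _ gs2) (gsV _ _ gs3) gt1 gt2 gt3 !eqxx.
Qed.

Lemma maps3_scale_KP m : mdet m != 0 -> maps m -> exists2 a, a != 0 & m = mscale a K.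
Proof.
move=> nm /and3P [/eqP m1 /eqP m2 /eqP m3].
have gtV p r : lft gt p = r -> lft (madj gt) r = p by move=> <-; rewrite lft_adjK.
(* [n] fixes oo, 0 and 1, hence is scalar, and [gt n (adj gs)] is a multiple of [m]. *)
pose n := mmul (mmul (madj gt) m) gs.
have nE p : lft n p = lft (madj gt) (lft m (lft gs p)) by rewrite !lft_mul.
have [c nc] : exists c, n = (c, 0, 0, c).
  by apply: lft_fix3_scalar; rewrite nE; apply: gtV; rewrite ?gs1 ?gs2 ?gs3 ?m1 ?m2 ?m3.
have c_neq0 : c != 0.
  have : mdet n != 0 by rewrite !mdet_mul mdet_adj !mulf_neq0.
  by rewrite nc /= mulr0 subr0 mulf_eq0 orbb.
have nK : mmul (mmul gt n) (madj gs) = mscale c K.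
  rewrite nc; case: gt (madj gs) => [[[a b] c'] d] [[[a' b'] c''] d'] /=.
  by congr (_, _, _, _); ring.
have nM : mmul (mmul gt n) (madj gs) = mscale (mdet gt * mdet gs) m.
  rewrite /n !mmulA mul_madj mscale_mull mul1m -mmulA mul_madj mscale_mulr mulm1.
  by rewrite mscaleA mulrC.
exists (c / (mdet gt * mdet gs)); first by rewrite mulf_neq0 ?invr_eq0 ?mulf_neq0.
by rewrite mulrC -mscaleA -nK nM mscaleA mulVf ?mscale1 ?mulf_neq0.
Qed.

Lemma mscale_K_inj : {in predC1 0 &, injective (fun a => mscale a K)}.
Proof.
move=> a b _ _ /(congr1 (fun m => (mmul m (madj K)).1.1.1)).
by rewrite !mscale_mull mul_madj !mscaleA /= !mulr1; apply: (mulIf mdet_K_neq0).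
Qed.

Lemma card_maps3_psl : #|[set m in psl_mats F | maps m]| =
  if nzsq (mdet K) then #|F|.-1 else 0%N.
Proof.
case: ifP => sqK.
  have -> : [set m in psl_mats F | maps m] = [set mscale a K | a in predC1 0].
    apply/setP => m; rewrite inE psl_matsE; apply/andP/imsetP => [[sm mm] | [a na ->]].
      by have [a na ->] := maps3_scale_KP (nzsq_neq0 sm) mm; exists a.
    by rewrite mdet_scale nzsq_mul_sqr // maps3_scale_K.
  by rewrite card_in_imset ?cardC1 //; apply: mscale_K_inj.
apply/eqP; rewrite cards_eq0; apply/eqP/setP => m; rewrite inE psl_matsE inE.
apply/negbTE/andP => -[sm mm]; have [a na mE] := maps3_scale_KP (nzsq_neq0 sm) mm.
by move: sm; rewrite mE mdet_scale nzsq_mul_sqr // sqK.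
Qed.

End SharpTransitivity.

Lemma card_maps3 (F : finFieldType) (s1 s2 s3 t1 t2 t3 : point F) : odd #|F| ->
  s1 != s2 -> s2 != s3 -> s3 != s1 -> t1 != t2 -> t2 != t3 -> t3 != t1 ->
  #|[set m in psl_mats F | maps3 s1 s2 s3 t1 t2 t3 m]| =
  if nzsq (tau s1 s2 s3) == nzsq (tau t1 t2 t3) then #|F|.-1 else 0%N.
Proof.
move=> oddF ns12 ns23 ns31 nt12 nt23 nt31.
have [gs1 gs2 gs3 es ds] := pframe_spec ns12 ns23 ns31.
have [gt1 gt2 gt3 et dt] := pframe_spec nt12 nt23 nt31.
rewrite (card_maps3_psl ds dt gs1 gs2 gs3 gt1 gt2 gt3) mdet_mul mdet_adj nzsqM // es et.
by rewrite !nzsq_mul_sqr ?invr_eq0 ?cross_hom_eq0 // eq_sym.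
Qed.

Section OrbitCount.
Variables (F : finFieldType) (B : {set F}).
Local Notation mat := (F * F * F * F)%type.
Local Notation G := (psl_mats F).
Local Notation eB := (embed B).

Definition psl_stab : {set mat} := [set m in G | lft m @: eB == eB].

Definition blocks_through (T : {set point F}) : {set {set point F}} :=
  [set Bl in orbit_blocks B | T \subset Bl].

Lemma lft_imset_mul m n (A : {set point F}) : mdet n != 0 ->
  lft (mmul m n) @: A = lft m @: (lft n @: A).
Proof. by move=> nd; rewrite -imset_comp; apply: eq_imset => p; rewrite /= lft_mul. Qed.

Lemma lft_imset_scale x m (A : {set point F}) : x != 0 -> lft (mscale x m) @: A = lft m @: A.
Proof. by move=> nx; apply: eq_imset => p; rewrite lft_scale. Qed.

Lemma lft_imset_adjK m (A : {set point F}) : mdet m != 0 -> lft (madj m) @: (lft m @: A) = A.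
Proof.
by move=> nd; rewrite -imset_comp (eq_imset _ (fun p => lft_adjK p nd)) imset_id.
Qed.

Lemma mmul_inj (m : mat) : mdet m != 0 -> injective (mmul m).
Proof.
move=> nd x y /(congr1 (mmul (mscale (mdet m)^-1 (madj m)))).
by rewrite !mmulA mscale_mull madj_mul mscaleA mulVf // mscale1 !mul1m.
Qed.

Lemma card_psl_fiber Bl : Bl \in orbit_blocks B ->
  #|[set m in G | lft m @: eB == Bl]| = #|psl_stab|.
Proof.
case/imsetP => m0; rewrite psl_matsE => sq0 ->; have nd0 := nzsq_neq0 sq0.
rewrite -(card_imset psl_stab (mmul_inj nd0)); apply: eq_card => m.
rewrite inE psl_matsE; apply/andP/imsetP => [[sm /eqP mB] | [n]].
  pose n := mscale (mdet m0)^-1 (mmul (madj m0) m); exists n.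
    rewrite inE psl_matsE mdet_scale mdet_mul mdet_adj nzsq_mul_sqr ?invr_eq0 ?nzsq_mul //=.
    by rewrite lft_imset_scale ?invr_eq0 // lft_imset_mul ?nzsq_neq0 // mB lft_imset_adjK.
  by rewrite mscale_mulr mmulA mul_madj mscale_mull mul1m mscaleA mulVf ?mscale1.
rewrite inE psl_matsE => /andP [sn /eqP nB] ->; split; first by rewrite mdet_mul nzsq_mul.
by rewrite lft_imset_mul ?nB ?nzsq_neq0.
Qed.

Lemma card_psl_cover (T : {set point F}) :
  #|[set m in G | T \subset lft m @: eB]| = (#|psl_stab| * #|blocks_through T|)%N.
Proof.
rewrite -sum1dep_card (partition_big (fun m => lft m @: eB) (mem (blocks_through T))) /=;
  last by move=> m /andP [Gm Tm]; rewrite inE Tm andbT; apply: imset_f.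
rewrite -[#|blocks_through T|]sum1_card big_distrr /=.
apply: eq_bigr => Bl; rewrite inE => /andP [oBl TBl].
rewrite muln1 -(card_psl_fiber oBl) -sum1dep_card; apply: eq_bigl => m.
by case: eqP => [-> | _]; rewrite ?TBl ?andbT ?andbF.
Qed.

End OrbitCount.

Section Triples.
Variables (F : finFieldType) (B : {set F}).
Local Notation G := (psl_mats F).
Local Notation eB := (embed B).

Definition triples3 : {set F * F * F} :=
  [set b | [&& b.1.1 \in B, b.1.2 \in B & b.2 \in B] &&
           [&& b.1.1 != b.1.2, b.1.2 != b.2 & b.2 != b.1.1]].

Definition tau3 (b : F * F * F) : F := tau (Some b.1.1) (Some b.1.2) (Some b.2).

Definition triples_sq (s : bool) : {set F * F * F} := [set b in triples3 | nzsq (tau3 b) == s].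

Lemma lft_embedP m t : reflect (exists2 y, y \in B & lft m (Some y) = t) (t \in lft m @: eB).
Proof.
apply: (iffP imsetP) => [[p /imsetP [y yB ->] ->] | [y yB <-]]; first by exists y.
by exists (Some y); rewrite ?imset_f.
Qed.

Variables t1 t2 t3 : point F.
Hypotheses (nt12 : t1 != t2) (nt23 : t2 != t3) (nt31 : t3 != t1).

Lemma card_triples_maps3 m : mdet m != 0 ->
  #|[set b in triples3 | maps3 (Some b.1.1) (Some b.1.2) (Some b.2) t1 t2 t3 m]| =
  ([set t1; t2; t3] \subset lft m @: eB : nat).
Proof.
move=> nd; have [TmB | TmB] /= := boolP (_ \subset _).
  have [y1 y1B e1] : exists2 y, y \in B & lft m (Some y) = t1
    by apply/lft_embedP; rewrite (subsetP TmB) // !inE eqxx.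
  have [y2 y2B e2] : exists2 y, y \in B & lft m (Some y) = t2
    by apply/lft_embedP; rewrite (subsetP TmB) // !inE eqxx orbT.
  have [y3 y3B e3] : exists2 y, y \in B & lft m (Some y) = t3
    by apply/lft_embedP; rewrite (subsetP TmB) // !inE eqxx !orbT.
  have neq y y' t t' : lft m (Some y) = t -> lft m (Some y') = t' -> t != t' -> y != y'.
    by move=> <- <-; apply: contraNneq => ->.
  apply/eqP/cards1P; exists (y1, y2, y3); apply/setP => -[[x1 x2] x3]; rewrite !inE /=.
  apply/andP/eqP => [[_ /and3P [/eqP f1 /eqP f2 /eqP f3]] | [-> -> ->]].
    rewrite -e1 -e2 -e3 in f1 f2 f3.
    by move: f1 f2 f3 => /(lft_inj nd) [->] /(lft_inj nd) [->] /(lft_inj nd) [->].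
  rewrite /maps3 /= e1 e2 e3 y1B y2B y3B !eqxx; split=> //.
  by rewrite (neq _ _ _ _ e1 e2) ?(neq _ _ _ _ e2 e3) ?(neq _ _ _ _ e3 e1).
apply/eqP; rewrite cards_eq0; apply/eqP/setP => -[[x1 x2] x3]; rewrite !inE /=.
apply/negbTE/andP => -[/andP [/and3P [x1B x2B x3B] _] /and3P [/eqP e1 /eqP e2 /eqP e3]].
case/negP: TmB; apply/subsetP => t; rewrite !inE.
case/orP => [/orP [] |] /eqP ->; apply/lft_embedP.
- by exists x1.
- by exists x2.
- by exists x3.
Qed.

Lemma card_psl_cover3 : odd #|F| ->
  #|[set m in G | [set t1; t2; t3] \subset lft m @: eB]| =
  (#|F|.-1 * #|triples_sq (nzsq (tau t1 t2 t3))|)%N.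
Proof.
move=> oddF; rewrite -sum1dep_card big_mkcondr /=.
transitivity (\sum_(m in G)
  \sum_(b in triples3 | maps3 (Some b.1.1) (Some b.1.2) (Some b.2) t1 t2 t3 m) 1)%N.
  apply: eq_bigr => m; rewrite psl_matsE => /nzsq_neq0 nd.
  by rewrite sum1dep_card card_triples_maps3 //; case: (_ \subset _).
rewrite (exchange_big_dep (mem triples3)) /=; last by move=> m b _ /andP [].
rewrite mulnC -sum_nat_const big_mkcond [RHS]big_mkcond; apply: eq_bigr => b _.
rewrite [b \in triples_sq _]inE; case b3 : (b \in triples3) => //=.
move: b3; rewrite inE => /andP [_ /and3P [nb12 nb23 nb31]].
by rewrite sum1dep_card card_maps3 ?(inj_eq Some_inj) // eq_sym.
Qed.

End Triples.

Lemma cards3 (T : finType) (x y z : T) :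
  x != y -> y != z -> z != x -> #|[set x; y; z]| = 3%N.
Proof.
move=> nxy nyz nzx; have -> : [set x; y; z] = x |: [set y; z].
  by apply/setP => t; rewrite !inE orbA.
by rewrite cardsU1 cards2 nyz !inE negb_or nxy eq_sym nzx.
Qed.

Lemma enum_card3 (T : finType) (S : {set T}) : #|S| = 3%N ->
  exists x y z, [/\ enum S = [:: x; y; z], S = [set x; y; z], x != y, y != z & z != x].
Proof.
move=> S3; have U := enum_uniq (mem S); have memS := mem_enum (mem S).
have : size (enum S) = 3%N by rewrite -cardE.
case def_S : (enum S) => [|x [|y [|z [|w s]]]] // _.
rewrite def_S /= !inE in U; case/and3P: U => /norP [nxy nxz] nyz _.
exists x, y, z; split=> //; last by rewrite eq_sym.
by apply/setP => t; rewrite -memS def_S !inE orbA.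
Qed.

Definition perm3 (T : Type) (x y z : T) : seq (T * T * T) :=
  [:: (x, y, z); (x, z, y); (y, x, z); (y, z, x); (z, x, y); (z, y, x)].

Lemma perm3_uniq (T : eqType) (x y z : T) :
  x != y -> y != z -> z != x -> uniq (perm3 x y z).
Proof.
move=> nxy nyz nzx; have nyx : y != x by rewrite eq_sym.
have nzy : z != y by rewrite eq_sym.
have nxz : x != z by rewrite eq_sym.
rewrite /= !inE !xpair_eqE !eqxx.
by rewrite !(negbTE nxy, negbTE nyz, negbTE nzx, negbTE nyx, negbTE nzy, negbTE nxz) !andbF.
Qed.

Lemma mem_perm3 (T : finType) (x y z : T) (b : T * T * T) :
  x != y -> y != z -> z != x ->
  (b \in perm3 x y z) =
  [&& b.1.1 != b.1.2, b.1.2 != b.2, b.2 != b.1.1 & [set b.1.1; b.1.2; b.2] == [set x; y; z]].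
Proof.
move=> nxy nyz nzx; have nyx : y != x by rewrite eq_sym.
have nzy : z != y by rewrite eq_sym.
have nxz : x != z by rewrite eq_sym.
case: b => [[b1 b2] b3] /=; apply/idP/idP.
  rewrite /perm3 !inE => /orP [|/orP [|/orP [|/orP [|/orP [|]]]]] /eqP [-> -> ->];
  rewrite ?nxy ?nyz ?nzx ?nyx ?nzy ?nxz ?eqxx //=; apply/eqP/setP => t; rewrite !inE;
  by case: (t == x); case: (t == y); case: (t == z).
case/and4P => n12 n23 n31 /eqP E.
have: [/\ b1 \in [set x; y; z], b2 \in [set x; y; z] & b3 \in [set x; y; z]].
  by rewrite -E !inE !eqxx !orbT.
rewrite /perm3 !inE !xpair_eqE.
case=> /orP [/orP [] | ] /eqP e1 /orP [/orP [] | ] /eqP e2 /orP [/orP [] | ] /eqP e3;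
  by move: n12 n23 n31; rewrite e1 e2 e3 ?eqxx //= => _ _ _; rewrite ?eqxx /= ?orbT.
Qed.

Section CharacterSum.
Variable F : finFieldType.
Hypothesis q4 : (#|F| %% 4 = 1)%N.

Lemma nzsqN (a : F) : nzsq (- a) = nzsq a.
Proof.
have [-> | na] := eqVneq a 0; first by rewrite oppr0.
by rewrite -mulN1r nzsqM ?odd_modn4_1 ?oppr_eq0 ?oner_eq0 // nzsqN1.
Qed.

Lemma chiN (a : F) : chi (- a) = chi a.
Proof. by rewrite /chi oppr_eq0 nzsqN. Qed.

Lemma chi_tau3_perm (x y z : F) : let c := chi (tau3 (x, y, z)) in
  [/\ chi (tau3 (x, z, y)) = c, chi (tau3 (y, x, z)) = c, chi (tau3 (y, z, x)) = c,
      chi (tau3 (z, x, y)) = c & chi (tau3 (z, y, x)) = c].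
Proof.
have chi_opp (a b : F) : b = - a -> chi b = chi a by move=> ->; rewrite chiN.
have chi_eq (a b : F) : b = a -> chi b = chi a by move=> ->.
rewrite /tau3 /= !tau_Some.
by split; [apply: chi_opp | apply: chi_opp | apply: chi_eq | apply: chi_eq | apply: chi_opp]; ring.
Qed.

End CharacterSum.

Section TripleSum.
Variables (F : finFieldType) (B : {set F}).
Hypothesis q4 : (#|F| %% 4 = 1)%N.

Lemma sum_chi_tau3_fiber (S : {set F}) : S \subset B -> #|S| = 3%N ->
  \sum_(b in triples3 B | [set b.1.1; b.1.2; b.2] == S) chi (tau3 b) = triple_term S *+ 6.
Proof.
move=> SB S3; have [x [y [z [eS defS nxy nyz nzx]]]] := enum_card3 S3.
rewrite (eq_bigl (mem (perm3 x y z))) => [|b].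
  rewrite -big_uniq ?perm3_uniq // !big_cons big_nil /triple_term eS /=.
  have [-> -> -> -> ->] := chi_tau3_perm q4 x y z.
  by rewrite [tau3 _]tau_Some !mulrS mulr0n.
rewrite /= mem_perm3 // inE -defS.
have [b3S | _] := eqVneq [set b.1.1; b.1.2; b.2] S; last by rewrite !andbF.
rewrite !andbT; apply: andb_idl => _; apply/and3P.
by split; apply: (subsetP SB); rewrite -b3S !inE eqxx ?orbT.
Qed.

Lemma sum_chi_tau3 : \sum_(b in triples3 B) chi (tau3 b) = triple_sum B *+ 6.
Proof.
rewrite /triple_sum -sumrMnl (partition_big (fun b => [set b.1.1; b.1.2; b.2])
  (mem [set S : {set F} | (S \subset B) && (#|S| == 3%N)])) => [|b] /=.
  apply: eq_bigr => S; rewrite inE => /andP [SB /eqP S3].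
  by rewrite -sum_chi_tau3_fiber.
rewrite !inE => /andP [/and3P [b1B b2B b3B] /and3P [n12 n23 n31]].
rewrite cards3 // eqxx andbT; apply/subsetP => t; rewrite !inE.
by case/orP => [/orP [] | ] /eqP ->.
Qed.

Lemma sum_chi_tau3_sq :
  \sum_(b in triples3 B) chi (tau3 b) = #|triples_sq B true|%:Z - #|triples_sq B false|%:Z.
Proof.
have chiE b : b \in triples3 B -> chi (tau3 b) = if nzsq (tau3 b) then 1 else -1.
  rewrite inE => /andP [_ /and3P [n12 n23 n31]].
  have nz : tau3 b != 0 by apply: tau_neq0; rewrite (inj_eq Some_inj).
  by rewrite /chi (negbTE nz).
rewrite (bigID (fun b => nzsq (tau3 b))) /=.
rewrite (eq_bigr (fun=> 1)) => [|b /andP [b3 sq]]; last by rewrite chiE ?sq.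
rewrite [X in _ + X](eq_bigr (fun=> -1)) => [|b /andP [b3 /negbTE nsq]];
  last by rewrite chiE ?nsq.
rewrite (eq_bigl (mem (triples_sq B true))) => [|b]; last by rewrite /= [in RHS]inE eqb_id.
rewrite [X in _ + X](eq_bigl (mem (triples_sq B false))) => [|b];
  last by rewrite /= [in RHS]inE eqbF_neg.
by rewrite !sumr_const mulNrn !natz.
Qed.

End TripleSum.

Section Design.
Variables (F : finFieldType) (B : {set F}).
Hypothesis oddF : odd #|F|.
Local Notation Np := #|triples_sq B true|.
Local Notation Nn := #|triples_sq B false|.

Lemma card_blocks_through3 (t1 t2 t3 : point F) : t1 != t2 -> t2 != t3 -> t3 != t1 ->
  (#|psl_stab B| * #|blocks_through B [set t1; t2; t3]| =
   #|F|.-1 * #|triples_sq B (nzsq (tau t1 t2 t3))|)%N.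
Proof. by move=> n12 n23 n31; rewrite -card_psl_cover card_psl_cover3. Qed.

Lemma psl_stab_gt0 : (0 < #|psl_stab B|)%N.
Proof.
apply/card_gt0P; exists (mid F); rewrite inE psl_matsE (eq_imset _ (@lft_id F)) imset_id eqxx.
by rewrite /= mulr0 subr0 mulr1 nzsq1.
Qed.

Lemma card_orbit_block Bl : Bl \in orbit_blocks B -> #|Bl| = #|B|.
Proof.
case/imsetP => m; rewrite psl_matsE => /nzsq_neq0 nd ->.
by rewrite !card_imset //; [apply: Some_inj | apply: lft_inj].
Qed.

Lemma exists_triples3 : (2 < #|B|)%N -> exists b, b \in triples3 B.
Proof.
have U := enum_uniq (mem B); have memB := mem_enum (mem B).
rewrite cardE; case def_B : (enum B) => [|x [|y [|z s]]] // _.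
rewrite def_B /= !inE in U; case/and4P: U => /norP [nxy /norP [nxz _]] /norP [nyz _] _ _.
exists (x, y, z); rewrite !inE /= -!memB def_B !inE !eqxx ?orbT nxy nyz /=.
by rewrite eq_sym.
Qed.

Lemma gives_3design_balanced : (2 < #|B|)%N -> gives_3design B #|B| <-> Np = Nn.
Proof.
move=> B3; have q1_gt0 : (0 < #|F|.-1)%N by rewrite -subn1 subn_gt0 finNzRing_gt1.
have [n n0 nsq] := exists_nonsq oddF.
have n01 : Some (0 : F) != Some 1 by rewrite (inj_eq Some_inj) eq_sym oner_neq0.
have n0n : Some (0 : F) != Some n by rewrite (inj_eq Some_inj) eq_sym.
have cnt_sq := @card_blocks_through3 None (Some 0) (Some 1) isT n01 isT.
have cnt_nsq := @card_blocks_through3 None (Some 0) (Some n) isT n0n isT.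
rewrite tau_inf0 nzsq1 in cnt_sq; rewrite tau_inf0 (negbTE nsq) in cnt_nsq.
split => [[_ [lam [_ lamE]]] | NpNn].
  rewrite /blocks_through !lamE ?cards3 // in cnt_sq cnt_nsq.
  by apply/eqP; rewrite -(eqn_pmul2l q1_gt0) -cnt_sq cnt_nsq.
split; first exact: card_orbit_block.
exists #|blocks_through B [set None; Some 0; Some 1]|; split.
  rewrite -(ltn_pmul2l psl_stab_gt0) muln0 cnt_sq muln_gt0 q1_gt0 /=.
  have [b b3] := exists_triples3 B3.
  suff : (0 < #|triples_sq B (nzsq (tau3 b))|)%N by case: (nzsq _); rewrite ?NpNn.
  by apply/card_gt0P; exists b; rewrite inE b3 eqxx.
move=> T /enum_card3 [t1 [t2 [t3 [_ -> n12 n23 n31]]]].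
apply/eqP; rewrite -(eqn_pmul2l psl_stab_gt0) card_blocks_through3 // cnt_sq.
by case: (nzsq _); rewrite ?NpNn.
Qed.

End Design.

Theorem lemma2p6 (F : finFieldType) (k : nat) (B : {set F}) :
  (#|F| %% 4 = 1)%N ->
  (3 <= k)%N -> (k %| #|F|.-1)%N -> ~~ odd (#|F|.-1 %/ k)%N ->
  (* B is the subgroup of order k of F^x *)
  (0 : F) \notin B -> (1 : F) \in B ->
  (forall x y, x \in B -> y \in B -> x * y \in B) -> #|B| = k ->
  (gives_3design B k <-> triple_sum B = 0).
Proof.
move=> q4 k_ge3 _ _ _ _ _ cardB; subst k.
rewrite gives_3design_balanced ?odd_modn4_1 //.
have sum6 := sum_chi_tau3 B q4; rewrite sum_chi_tau3_sq in sum6.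
split => [NpNn | sum0].
  have : triple_sum B *+ 6 == 0 by rewrite -sum6 NpNn subrr.
  by rewrite mulrn_eq0 => /eqP.
by apply/eqP; rewrite -eqz_nat -subr_eq0 sum6 sum0 mul0rn.
Qed.
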